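(* Let $E,J,R,Q\in\mathbb{R}^{n\times n}$ with $J=-J^T$, $R=R^T\ge0$, $Q^TE=E^TQ\ge0$ and $\ker Q\subseteq\ker E$. Then: (a) If the pencil $sE-Q$ is regular, then $Q$ is invertible. (b) If $Q$ is invertible, then $[E,(J-R)Q]$ is stable if and only if $\ker J\cap\ker R\cap(Q\ker E)=\{0\}$.
   Context: A pencil $sE-A$ is regular if $\det(sE-A)$ is not the zero polynomial. For $E,A\in\mathbb{R}^{n\times n}$, $[E,A]$ is stable if every $x\in C^\infty(\mathbb{R},\mathbb{R}^n)$ with $\tfrac{d}{dt}Ex=Ax$ is bounded on $[0,\infty)$. $Q\ker E=\{Qx: Ex=0\}$. *)

From HB Require Import structures.
From mathcomp Require Import all_boot all_order all_algebra.
From mathcomp Require Import all_classical all_reals all_analysis.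
Set Implicit Arguments. Unset Strict Implicit. Unset Printing Implicit Defensive.
Import Order.TTheory GRing.Theory Num.Theory.
Import numFieldNormedType.Exports.
Local Open Scope ring_scope.

Definition regular_pencil (R : realType) (n : nat) (E A : 'M[R]_n) : Prop :=
  \det ('X *: map_mx polyC E - map_mx polyC A) != 0.

Definition smooth (R : realType) (n : nat) (x : R -> 'cV[R]_n) : Prop :=
  forall (k : nat) (t : R), derivable (iter k (@derive1 R _) x) t 1.

Definition stable (R : realType) (n : nat) (E A : 'M[R]_n) : Prop :=
  forall x : R -> 'cV[R]_n, smooth x ->
    (forall t : R, is_derive t 1 (fun s => E *m x s) (A *m x t)) ->
    exists M : R, forall t : R, 0 <= t -> `|x t| <= M.

Definition psd (R : realType) (n : nat) (M : 'M[R]_n) : Prop :=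
  forall v : 'cV[R]_n, 0 <= (v^T *m M *m v) 0 0.

From HB Require Import structures.
From mathcomp Require Import all_boot all_order all_algebra.
From mathcomp Require Import all_classical all_reals all_analysis.
From mathcomp Require Import ring lra.
Import Order.TTheory GRing.Theory Num.Theory.
Import numFieldNormedType.Exports.
Set Implicit Arguments. Unset Strict Implicit. Unset Printing Implicit Defensive.
Local Open Scope ring_scope.

(* Put P := Q^T E (symmetric, positive semidefinite) and A := (J - R) Q.
   (a) If Q v = 0 with v <> 0, then E v = 0, so (sE - Q) v = 0 over R[s]
       and det (sE - Q) = 0; hence a regular pencil forces Q invertible.
   (b, =>) If E w = 0 and v = Q w lies in ker J /\ ker R, the line
       t |-> t w solves d/dt (E x) = A x; boundedness forces w = 0.
   (b, <=) Along any solution, d/dt x^T P x = -2 (Q x)^T R (Q x) <= 0, so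
       the energy x^T P x is nonincreasing on [0, oo); the derivative x' is
       again a solution, so the same holds for x'.  For psd P one has
       |P y|^2 <= C y^T P y, which bounds P x and P x' = Q^T (J - R) Q x.
       The kernel condition makes v |-> (P v, Q^T (J - R) Q v) injective,
       and an injective linear map is bounded below, so x is bounded.
   The file first collects norm estimates for matrices, facts on quadratic
   forms, and derivatives of matrix-valued functions; then it proves the
   energy estimate and the three implications. *)

Section MatrixNorm.
Context {R : realType}.

(* The matrix norm is the maximum of the absolute values of the entries. *)
Lemma entry_le_mx_norm m n (u : 'M[R]_(m, n)) i j : `|u i j| <= `|u|.
Proof.
rewrite [leRHS]/Num.Def.normr /= mx_normrE.
exact: (le_bigmax _ (fun ij : 'I_m * 'I_n => `|u ij.1 ij.2|) (i, j)).
Qed.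

Lemma mx_norm_le_entries m n (u : 'M[R]_(m, n)) c :
  0 <= c -> (forall i j, `|u i j| <= c) -> `|u| <= c.
Proof.
move=> c0 uc; rewrite [leLHS]/Num.Def.normr /= mx_normrE.
by apply: bigmax_le => // -[i j] _; exact: uc.
Qed.

Lemma mulmx_norm_bound p q (M : 'M[R]_(p, q)) :
  exists2 c, 0 <= c & forall u : 'cV[R]_q, `|M *m u| <= c * `|u|.
Proof.
have c0 : 0 <= \sum_i \sum_k `|M i k|.
  by apply: sumr_ge0 => i _; apply: sumr_ge0.
exists (\sum_i \sum_k `|M i k|) => // u.
apply: mx_norm_le_entries => [|i j]; first exact: mulr_ge0.
rewrite mxE (le_trans (ler_norm_sum _ _ _)) //.
apply: (@le_trans _ _ (\sum_k `|M i k| * `|u|)).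
  apply: ler_sum => k _; rewrite normrM ler_wpM2l //.
  by rewrite (ord1 j) entry_le_mx_norm.
rewrite -mulr_suml ler_wpM2r // (bigD1 i) //= lerDl.
by apply: sumr_ge0 => i' _; apply: sumr_ge0.
Qed.

End MatrixNorm.

Definition form (R : realType) (n : nat) (P : 'M[R]_n) (u v : 'cV[R]_n) : R :=
  (u^T *m P *m v) 0 0.

Section QuadraticForms.
Context {R : realType}.

Lemma dotE n (a b : 'cV[R]_n) : (a^T *m b) 0 0 = \sum_k a k 0 * b k 0.
Proof. by rewrite mxE; apply: eq_bigr => k _; rewrite mxE. Qed.

Lemma dot_ge0 n (a : 'cV[R]_n) : 0 <= (a^T *m a) 0 0.
Proof. by rewrite dotE; apply: sumr_ge0 => k _; rewrite -expr2 sqr_ge0. Qed.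

Lemma sqr_mx_norm_le_dot n (a : 'cV[R]_n) : `|a| ^+ 2 <= (a^T *m a) 0 0.
Proof.
have s0 := dot_ge0 a.
suff : `|a| <= Num.sqrt ((a^T *m a) 0 0).
  by move=> h; rewrite -(sqr_sqrtr s0) lerXn2r // ?nnegrE // sqrtr_ge0.
apply: mx_norm_le_entries => // i j; rewrite (ord1 j).
rewrite -sqrtr_sqr ler_sqrt // dotE (bigD1 i) //= -expr2 lerDl.
by apply: sumr_ge0 => k _; rewrite -expr2 sqr_ge0.
Qed.

Lemma dot_eq0 n (a : 'cV[R]_n) : (a^T *m a) 0 0 = 0 -> a = 0.
Proof.
move=> a0; have := sqr_mx_norm_le_dot a; rewrite a0 => h.
by apply: mx_norm_eq0; apply/eqP; rewrite -sqrf_eq0 eq_le h sqr_ge0.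
Qed.

Lemma dot_norm_bound n (a b : 'cV[R]_n) :
  `|(a^T *m b) 0 0| <= n%:R * `|a| * `|b|.
Proof.
rewrite dotE (le_trans (ler_norm_sum _ _ _)) //.
apply: (@le_trans _ _ (\sum_(k < n) `|a| * `|b|)).
  by apply: ler_sum => k _; rewrite normrM ler_pM // entry_le_mx_norm.
by rewrite sumr_const card_ord -mulrA mulr_natl.
Qed.

Lemma form_tr n (P : 'M[R]_n) (u v : 'cV[R]_n) : form P u v = form P^T v u.
Proof.
have tr00 (X : 'M[R]_1) : X 0 0 = X^T 0 0 by rewrite mxE.
by rewrite /form tr00 !trmx_mul trmxK mulmxA.
Qed.

Lemma form_sym n (P : 'M[R]_n) (u v : 'cV[R]_n) :
  P^T = P -> form P u v = form P v u.
Proof. by move=> sP; rewrite form_tr sP. Qed.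

Lemma form_expand n (P : 'M[R]_n) (a b : 'cV[R]_n) (l : R) :
  form P (a + l *: b) (a + l *: b) =
  form P a a + l * (form P a b + form P b a) + l ^+ 2 * form P b b.
Proof.
rewrite /form !(linearD, linearZ) /= !mulmxDl -!scalemxAl.
rewrite !mxE; ring.
Qed.

Lemma quadratic_ge0_discr (a b c : R) : 0 <= c ->
  (forall l, 0 <= a + 2 * l * b + l ^+ 2 * c) -> b ^+ 2 <= a * c.
Proof.
move=> c0 q0; have a0 : 0 <= a by have := q0 0; rewrite mulr0 !mul0r expr0n /= mul0r !addr0.
have [c_eq0|cn0] := eqVneq c 0.
  have [->|bn0] := eqVneq b 0; first by rewrite expr0n mulr_ge0.
  have := q0 (- (a + 1) / (2 * b)).
  have -> : 2 * (- (a + 1) / (2 * b)) * b = - (a + 1) by field.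
  by rewrite c_eq0 !mulr0; lra.
have cp : 0 < c by rewrite lt_neqAle eq_sym cn0.
have := q0 (- b / c).
have -> : a + 2 * (- b / c) * b + (- b / c) ^+ 2 * c = a - b ^+ 2 / c by field.
by rewrite subr_ge0 ler_pdivrMr.
Qed.

Section PsdForm.
Variables (n : nat) (P : 'M[R]_n).
Hypotheses (sP : P^T = P) (pP : psd P).

Lemma psd_cauchy_schwarz (a b : 'cV[R]_n) :
  form P a b ^+ 2 <= form P a a * form P b b.
Proof.
apply: quadratic_ge0_discr => [|l]; first exact: pP.
by have := pP (a + l *: b); rewrite -/(form _ _ _) form_expand (form_sym b a sP); lra.
Qed.

Lemma psd_form_eq0 (z : 'cV[R]_n) : form P z z = 0 -> P *m z = 0.
Proof.
move=> z0; apply: dot_eq0; apply/eqP; rewrite -sqrf_eq0 eq_le sqr_ge0 andbT.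
by have := psd_cauchy_schwarz (P *m z) z; rewrite z0 mulr0 /form mulmxA.
Qed.

Lemma psd_image_bound :
  exists2 C, 0 <= C & forall y : 'cV[R]_n, `|P *m y| ^+ 2 <= C * form P y y.
Proof.
have [c c0 hc] := mulmx_norm_bound P.
have C0 : 0 <= n%:R * c by exact: mulr_ge0.
exists (n%:R * c) => // y; set u := P *m y; set s := (u^T *m u) 0 0.
have s0 : 0 <= s := dot_ge0 u.
have suy : form P u y = s by rewrite /form -mulmxA.
have fuu : form P u u <= n%:R * c * s.
  rewrite /form -mulmxA (le_trans (ler_norm _)) // (le_trans (dot_norm_bound _ _)) //.
  apply: (@le_trans _ _ (n%:R * `|u| * (c * `|u|))).
    by rewrite ler_wpM2l ?hc // mulr_ge0.
  have -> : n%:R * `|u| * (c * `|u|) = n%:R * c * `|u| ^+ 2 by ring.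
  by rewrite ler_wpM2l // sqr_mx_norm_le_dot.
apply: le_trans (sqr_mx_norm_le_dot u) _; rewrite -/s.
have [->|sn0] := eqVneq s 0; first by rewrite mulr_ge0 // pP.
have sp : 0 < s by rewrite lt_neqAle eq_sym sn0.
rewrite -(ler_pM2l sp) -expr2 -suy (le_trans (psd_cauchy_schwarz u y)) //.
by rewrite suy mulrA [s * _]mulrC ler_wpM2r // pP.
Qed.

End PsdForm.

Lemma skew_form n (J : 'M[R]_n) (z : 'cV[R]_n) : J^T = - J -> form J z z = 0.
Proof.
move=> sJ; have := form_tr J z z; rewrite sJ /form mulmxN mulNmx [in X in _ = X]mxE.
lra.
Qed.

Lemma injective_lower_bound p q n (P : 'M[R]_(p, n)) (A : 'M[R]_(q, n)) :
  (forall v : 'cV[R]_n, P *m v = 0 -> A *m v = 0 -> v = 0) ->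
  exists2 C, 0 <= C & forall v : 'cV[R]_n, `|v| <= C * (`|P *m v| + `|A *m v|).
Proof.
move=> inj; set G := P^T *m P + A^T *m A.
have gram m (M : 'M[R]_(m, n)) (w : 'rV[R]_n) :
    w *m (M^T *m M) *m w^T = (M *m w^T)^T *m (M *m w^T).
  by rewrite trmx_mul trmxK !mulmxA.
have Gu : G \in unitmx.
  rewrite unitmxE unitfE; apply/negP => /det0P [w wn0 wG].
  have : (w *m G *m w^T) 0 0 = 0 by rewrite wG mul0mx mxE.
  rewrite /G mulmxDr mulmxDl !gram mxE => sum0.
  have := dot_ge0 (P *m w^T); have := dot_ge0 (A *m w^T) => hA hP.
  have Pw : P *m w^T = 0 by apply: dot_eq0; lra.
  have Aw : A *m w^T = 0 by apply: dot_eq0; lra.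
  by move: wn0; rewrite -[w]trmxK (inj _ Pw Aw) linear0 eqxx.
have [c0 c00 hc0] := mulmx_norm_bound (invmx G).
have [cP cP0 hcP] := mulmx_norm_bound P^T.
have [cA cA0 hcA] := mulmx_norm_bound A^T.
exists (c0 * (cP + cA)) => [|v]; first by rewrite mulr_ge0 // addr_ge0.
have hv : v = invmx G *m (P^T *m (P *m v) + A^T *m (A *m v)).
  by rewrite !mulmxA -mulmxDl -/G mulKmx.
rewrite {1}hv (le_trans (hc0 _)) // -mulrA ler_wpM2l //.
rewrite (le_trans (ler_normD _ _)) //.
have := hcP (P *m v); have := hcA (A *m v).
have := normr_ge0 (P *m v); have := normr_ge0 (A *m v); nra.
Qed.

End QuadraticForms.

Section MatrixDerivatives.
Context {R : realType} {V : normedModType R}.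

Lemma is_derive_mx m n (x : V -> 'M[R]_(m, n)) (t v : V) (d : 'M[R]_(m, n)) :
  (forall i j, is_derive t v (fun s => x s i j) (d i j)) -> is_derive t v x d.
Proof.
move=> dxij.
have dx : derivable x t v by apply/derivable_mxP => i j; have [] := dxij i j.
apply: (is_derive_eq (derivableP dx)).
by rewrite (derive_mx dx); apply/matrixP => i j; rewrite mxE derive_val.
Qed.

Lemma is_derive_entry m n (x : V -> 'M[R]_(m, n)) (t v : V) i j :
  derivable x t v -> is_derive t v (fun s => x s i j) ('D_v x t i j).
Proof.
move=> dx; apply: (is_derive_eq (derivableP ((derivable_mxP x t v).1 dx i j))).
by rewrite (derive_mx dx) mxE.
Qed.

Lemma is_derive_mulmx p m n (M : 'M[R]_(p, m)) (x : V -> 'M[R]_(m, n)) (t v : V) :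
  derivable x t v -> is_derive t v (fun s => M *m x s) (M *m 'D_v x t).
Proof.
move=> dx; apply: is_derive_mx => i j.
have -> : (fun s => (M *m x s) i j) = \sum_k (fun s => M i k *: x s k j).
  by apply/funext => s; rewrite fct_sumE mxE.
rewrite mxE; apply: is_derive_sum => k.
exact: is_deriveZ (is_derive_entry k j dx).
Qed.

End MatrixDerivatives.

Section Energy.
Context {R : realType}.

Lemma is_derive_form n (P : 'M[R]_n) (y : R -> 'cV[R]_n) (t : R) :
  P^T = P -> derivable y t 1 ->
  is_derive t 1 (fun s => form P (y s) (y s)) (2 * form P (y t) ('D_1 y t)).
Proof.
move=> sP dy; have dPy := is_derive_mulmx P dy.
have -> : (fun s => form P (y s) (y s)) =
          \sum_k ((fun s => y s k 0) * (fun s => (P *m y s) k 0)).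
  by apply/funext => s; rewrite fct_sumE /form -mulmxA dotE.
have dk k : is_derive t 1 ((fun s => y s k 0) * (fun s => (P *m y s) k 0))
    (y t k 0 * (P *m 'D_1 y t) k 0 + (P *m y t) k 0 * 'D_1 y t k 0).
  have [dPy_ex dPy_val] := dPy.
  have := is_derive_entry k 0 dPy_ex; rewrite dPy_val => dPyk.
  exact: is_derive_eq (is_deriveM (is_derive_entry k 0 dy) dPyk) _.
apply: is_derive_eq (is_derive_sum dk) _.
rewrite big_split /= -!dotE trmx_mul sP mulmxA -/(form _ _ _) /form.
by rewrite -mulmxA -/(form _ _ _); ring.
Qed.

Lemma form_nonincreasing n (P : 'M[R]_n) (y : R -> 'cV[R]_n) :
  P^T = P -> (forall t, derivable y t 1) ->
  (forall t, form P (y t) ('D_1 y t) <= 0) ->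
  forall t, 0 <= t -> form P (y t) (y t) <= form P (y 0) (y 0).
Proof.
move=> sP dy dissip t t0.
have dV s := is_derive_form sP (dy s).
have dV_ex s : derivable (fun s => form P (y s) (y s)) s 1 by have [] := dV s.
apply: (@ler0_derive1_nincr _ (fun s => form P (y s) (y s)) 0 t) => // [s _|].
- by rewrite derive1E derive_val; have := dissip s; lra.
- by apply: derivable_within_continuous => s _; exact: dV_ex.
Qed.

End Energy.

Definition solution (R : realType) (n : nat) (E A : 'M[R]_n)
    (x : R -> 'cV[R]_n) : Prop :=
  forall t : R, is_derive t 1 (fun s => E *m x s) (A *m x t).

Section DescriptorSystems.
Context {R : realType} {n : nat}.
Implicit Types (E A : 'M[R]_n) (x : R -> 'cV[R]_n).

Lemma unitmx_mul_eq0 (M : 'M[R]_n) (u : 'cV[R]_n) :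
  M \in unitmx -> M *m u = 0 -> u = 0.
Proof. by move=> Mu Mu0; rewrite -(mulKmx Mu u) Mu0 mulmx0. Qed.

Lemma smooth_derivable x : smooth x -> forall t, derivable x t 1.
Proof. by move=> sx; exact: sx 0%N. Qed.

Lemma smooth_derive1 x : smooth x -> smooth (derive1 x).
Proof. by move=> sx k t; rewrite -iterSr; exact: sx. Qed.

Lemma solution_eq E A x : (forall t, derivable x t 1) -> solution E A x ->
  forall t, E *m (derive1 x) t = A *m x t.
Proof.
move=> dx sol t; have [_ <-] := sol t.
by rewrite derive1E; have [_ ->] := is_derive_mulmx E (dx t).
Qed.

(* Time-invariance: the derivative of a smooth solution is again a solution. *)
Lemma solution_derive1 E A x : smooth x -> solution E A x -> solution E A (derive1 x).
Proof.
move=> sx sol t; have dx := smooth_derivable sx.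
have -> : (fun s => E *m (derive1 x) s) = (fun s => A *m x s).
  by apply/funext => s; exact: solution_eq.
by rewrite derive1E; exact: is_derive_mulmx.
Qed.

Lemma is_derive_line (w : 'cV[R]_n) (t : R) : is_derive t 1 (fun s : R => s *: w) w.
Proof.
apply: is_derive_mx => i j.
have -> : (fun s : R => (s *: w) i j) = (fun s => w i j *: s).
  by apply/funext => s; rewrite mxE mulrC.
apply: is_derive_eq (is_deriveZ (w i j) (is_derive_id t 1)) _.
by rewrite /GRing.scale /= mulr1.
Qed.

Lemma smooth_line (w : 'cV[R]_n) : smooth (fun s : R => s *: w).
Proof.
have d1 : derive1 (fun s : R => s *: w) = cst w.
  by apply/funext => t; rewrite derive1E; have [_ ->] := is_derive_line w t.
case=> [|k] t; first by have [] := is_derive_line w t.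
suff [c ->] : exists c, iter k.+1 (@derive1 R _) (fun s : R => s *: w) = cst c.
  exact: derivable_cst.
elim: k => [|k [c IH]]; first by exists w; exact: d1.
by exists 0; rewrite iterS IH; apply/funext => s; rewrite derive1_cst.
Qed.

End DescriptorSystems.

(* Part (a): a regular pencil sE - Q with ker Q in ker E has Q invertible,
   since a kernel vector of Q is annihilated by sE - Q over R[s]. *)
Lemma regular_pencil_unitmx (R : realType) (n : nat) (E Q : 'M[R]_n) :
  (forall v : 'cV[R]_n, Q *m v = 0 -> E *m v = 0) ->
  regular_pencil E Q -> Q \in unitmx.
Proof.
move=> kerQE; apply: contraTT; rewrite unitmxE unitfE negbK => /eqP dQ.
have /det0P [w wn0 wQ] : \det Q^T == 0 by rewrite det_tr dQ.
have Qv : Q *m w^T = 0 by rewrite -[Q]trmxK -trmx_mul wQ linear0.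
set M := 'X *: map_mx polyC E - map_mx polyC Q.
have Mv : M *m map_mx polyC w^T = 0.
  by rewrite mulmxBl -scalemxAl -!map_mxM (kerQE _ Qv) Qv !map_mx0 scaler0 subr0.
have detMv : \det M *: map_mx polyC w^T = 0.
  by rewrite -mul_scalar_mx -mul_adj_mx -mulmxA Mv mulmx0.
have [i wi] : exists i, w 0 i != 0.
  apply/existsP; apply: contraNT wn0; rewrite negb_exists => /forallP w0.
  by apply/eqP/matrixP => i j; rewrite (ord1 i) mxE; apply/eqP; move: (w0 j); rewrite negbK.
move/matrixP/(_ i 0)/eqP: detMv; rewrite !mxE mulf_eq0 polyC_eq0 (negbTE wi) orbF.
by rewrite /regular_pencil -/M => ->.
Qed.

(* Part (b), necessity: if E w = 0 and Q w lies in ker J /\ ker R, the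
   unbounded line t |-> t w is a solution, so stability forces w = 0. *)
Lemma stable_kernel_condition (R : realType) (n : nat) (E J Rm Q : 'M[R]_n) :
  stable E ((J - Rm) *m Q) ->
  forall v : 'cV[R]_n, J *m v = 0 -> Rm *m v = 0 ->
  (exists w : 'cV[R]_n, E *m w = 0 /\ v = Q *m w) -> v = 0.
Proof.
move=> st v Jv Rv [w [Ew vQw]]; rewrite vQw in Jv Rv *.
suff -> : w = 0 by rewrite mulmx0.
have [M HM] : exists M : R, forall t : R, 0 <= t -> `|t *: w| <= M.
  apply: (st _ (smooth_line (w:=w))) => t.
  have -> : (fun s : R => E *m (s *: w)) = cst 0.
    by apply/funext => s; rewrite -scalemxAr Ew scaler0.
  rewrite -scalemxAr -mulmxA mulmxBl Jv Rv subr0 scaler0.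
  exact: is_derive_cst.
apply: contraPeq (lt_irreflexive M) => wn0; rewrite lt_irreflexive.
have wp : 0 < `|w| by rewrite normr_gt0.
have t0 : 0 <= (`|M| + 1) / `|w| by rewrite divr_ge0 // addr_ge0.
have := HM _ t0; rewrite normrZ ger0_norm // divfK ?gt_eqF //.
by have := ler_norm M; lra.
Qed.

Section PortHamiltonianStability.
Context {R : realType} {n : nat}.
Variables (E J Rm Q : 'M[R]_n).
Hypotheses (skewJ : J^T = - J) (symR : Rm^T = Rm) (psdR : psd Rm).

Let P := Q^T *m E.
Let D := Q^T *m (J - Rm) *m Q.

Lemma dissipative_form (z : 'cV[R]_n) : form (J - Rm) z z = - form Rm z z.
Proof.
by rewrite /form mulmxBr mulmxBl [LHS]mxE -/(form J _ _) skew_form // add0r mxE.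
Qed.

(* Power balance: along E y' = (J - R) Q y the energy can only decrease,
   as y^T P y' = (Q y)^T (J - R) (Q y) = - (Q y)^T R (Q y). *)
Lemma ph_dissipation (y y' : 'cV[R]_n) :
  E *m y' = (J - Rm) *m Q *m y -> form P y y' <= 0.
Proof.
move=> Ey'; have -> : form P y y' = form (J - Rm) (Q *m y) (Q *m y).
  by rewrite /form /P trmx_mul -!mulmxA Ey' !mulmxA.
by rewrite dissipative_form oppr_le0; exact: psdR.
Qed.

Lemma ph_energy_decay (sQE : Q^T *m E = E^T *m Q) (y : R -> 'cV[R]_n) :
  (forall t, derivable y t 1) -> solution E ((J - Rm) *m Q) y ->
  forall t, 0 <= t -> form P (y t) (y t) <= form P (y 0) (y 0).
Proof.
move=> dy sol; apply: (form_nonincreasing _ dy) => [|t].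
  by rewrite /P trmx_mul trmxK sQE.
by rewrite -derive1E; apply: ph_dissipation; exact: solution_eq dy sol t.
Qed.

Lemma ph_kernel_injective : Q \in unitmx ->
  (forall v : 'cV[R]_n, J *m v = 0 -> Rm *m v = 0 ->
     (exists w : 'cV[R]_n, E *m w = 0 /\ v = Q *m w) -> v = 0) ->
  forall v : 'cV[R]_n, P *m v = 0 -> D *m v = 0 -> v = 0.
Proof.
move=> Qu kercond v Pv Dv.
have QTu : Q^T \in unitmx by rewrite unitmx_tr.
have Ev : E *m v = 0 by apply: (unitmx_mul_eq0 QTu); rewrite mulmxA.
have JRz : (J - Rm) *m (Q *m v) = 0.
  by apply: (unitmx_mul_eq0 QTu); rewrite !mulmxA.
have Rz : Rm *m (Q *m v) = 0.
  apply: psd_form_eq0 => //; apply/eqP; rewrite -oppr_eq0 -dissipative_form.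
  by rewrite /form -mulmxA JRz mulmx0 mxE.
have Jz : J *m (Q *m v) = 0 by move: JRz; rewrite mulmxBl Rz subr0.
by apply: (unitmx_mul_eq0 Qu); apply: kercond Jz Rz _; exists v.
Qed.

(* Part (b), sufficiency: the energies of x and x' bound P x and D x, and
   the injectivity of (P, D) turns these into a bound on x. *)
Lemma kernel_condition_stable :
  Q^T *m E = E^T *m Q -> psd (Q^T *m E) -> Q \in unitmx ->
  (forall v : 'cV[R]_n, J *m v = 0 -> Rm *m v = 0 ->
     (exists w : 'cV[R]_n, E *m w = 0 /\ v = Q *m w) -> v = 0) ->
  stable E ((J - Rm) *m Q).
Proof.
move=> sQE psdP Qu kercond x sx sol.
have dx := smooth_derivable sx; have sx' := smooth_derive1 sx.
have sol' := solution_derive1 sx sol.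
have symP : P^T = P by rewrite /P trmx_mul trmxK sQE.
have [C C0 hC] := psd_image_bound symP psdP.
have [K K0 hK] := injective_lower_bound (ph_kernel_injective Qu kercond).
have sqr_le (u b : R) : u ^+ 2 <= b -> u <= 1 + b by move=> ub; nra.
exists (K * ((1 + C * form P (x 0) (x 0)) +
             (1 + C * form P (derive1 x 0) (derive1 x 0)))) => t t0.
apply: le_trans (hK _) _; rewrite ler_wpM2l // lerD //; apply: sqr_le.
- apply: le_trans (hC _) _; rewrite ler_wpM2l //.
  exact: ph_energy_decay.
- have -> : D *m x t = P *m derive1 x t.
    by rewrite /D /P -[Q^T *m E *m _]mulmxA (solution_eq dx sol) !mulmxA.
  apply: le_trans (hC _) _; rewrite ler_wpM2l //.
  exact: ph_energy_decay (smooth_derivable sx') sol' t t0.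
Qed.

End PortHamiltonianStability.

Theorem proposition4 (R : realType) (n : nat) (E J Rm Q : 'M[R]_n) :
  J^T = - J ->
  Rm^T = Rm -> psd Rm ->
  Q^T *m E = E^T *m Q -> psd (Q^T *m E) ->
  (forall v : 'cV[R]_n, Q *m v = 0 -> E *m v = 0) ->
  (regular_pencil E Q -> Q \in unitmx) /\
  (Q \in unitmx ->
    (stable E ((J - Rm) *m Q) <->
     (forall v : 'cV[R]_n, J *m v = 0 -> Rm *m v = 0 ->
        (exists w : 'cV[R]_n, E *m w = 0 /\ v = Q *m w) -> v = 0))).
Proof.
move=> skewJ symR psdR sQE psdP kerQE; split; first exact: regular_pencil_unitmx.
move=> Qu; split; first exact: stable_kernel_condition.
exact: kernel_condition_stable.
Qed.
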